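(* Let $J\ge1$ and let $\boldsymbol\lambda_j^0=(\alpha_j^0,\sigma_j^0)$, $j=1,\dots,J$, with $\max_j|\alpha_j^0|<1$ and $\min_j\sigma_j^0>0$. For $\boldsymbol\lambda=(\alpha,\sigma)$ with $|\alpha|<1$ let $h(\boldsymbol\lambda,\theta)=\frac{\sigma^2}{|1-\alpha e^{i\theta}|^2}=\gamma_0(\boldsymbol\lambda)+2\sum_{\ell\ge1}\gamma_\ell(\boldsymbol\lambda)\cos(\ell\theta)$, $\gamma_\ell(\boldsymbol\lambda)=\sigma^2\alpha^\ell/(1-\alpha^2)$, be the spectral density of the univariate AR(1) process $x_t=\alpha x_{t-1}+\sigma z_t$ driven by unit-variance white noise. If $\alpha_1^0,\dots,\alpha_J^0$ are all distinct, then the $J\times J$ matrix $$\mathbf{G}(\boldsymbol\Lambda_J^0)=\frac{1}{2\pi}\int_0^{2\pi}\underline{\mathbf{h}}^0(\theta)(\underline{\mathbf{h}}^0(\theta))^T\,d\theta,\qquad\underline{\mathbf{h}}^0(\theta)=(h(\boldsymbol\lambda_j^0,\theta))_{j=1}^J,$$ is positive definite.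
   Context: This concerns a $p$-dimensional AR(1) process $X_t=\mathbf{A}X_{t-1}+\Sigma^{1/2}Z_t$ with $\mathbf{A},\Sigma$ symmetric/Hermitian, $\|\mathbf{A}\|<1$, simultaneously diagonalized by a unitary $\mathbf{U}$ with $\mathbf{U}^*\mathbf{A}\mathbf{U}=\mathrm{diag}(\alpha_k)$, $\mathbf{U}^*\Sigma\mathbf{U}=\mathrm{diag}(\sigma_k^2)$, whose joint spectrum of $(\mathbf{A},\Sigma)$ is $\sum_{j=1}^J\omega_j\delta_{\boldsymbol\lambda_j^0}$; $h(\boldsymbol\lambda_j^0,\cdot)$ is then the spectral density of the $j$-th type of coordinate process. *)

From Stdlib Require Import Reals.
From Coquelicot Require Import Coquelicot.
From mathcomp Require Import all_boot all_algebra.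
From mathcomp Require Import Rstruct.
Local Open Scope R_scope.

Set Implicit Arguments.
Unset Strict Implicit.
Unset Printing Implicit Defensive.

Definition expi (theta : R) : C := (cos theta, sin theta).

Definition h_ar1 (a s theta : R) : R :=
  (s ^ 2 / (Cmod (Cminus (RtoC 1) (Cmult (RtoC a) (expi theta)))) ^ 2).

Definition G_mat (J : nat) (alpha sigma : 'I_J -> R) : 'M[R]_J :=
  \matrix_(j < J, k < J)
    (/ (2 * PI) * RInt (fun theta => h_ar1 (alpha j) (sigma j) theta
                                    * h_ar1 (alpha k) (sigma k) theta)
                       0 (2 * PI)).

Definition pos_def (J : nat) (M : 'M[R]_J) : Prop :=
  (forall j k, M j k = M k j) /\
  (forall x : 'cV[R]_J, x <> const_mx 0 -> 0 < (mulmx (mulmx (trmx x) M) x) ord0 ord0).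

From Stdlib Require Import Reals Lra Psatz Classical.
From Coquelicot Require Import Coquelicot.
From mathcomp Require Import all_boot all_algebra.
From mathcomp Require Import Rstruct.
Import GRing.Theory Num.Theory.

(* The quadratic form of G at x is (1/2pi) times the integral of F^2, where
   F = sum_j x_j h(lambda_j, .) is continuous, so it is positive unless F
   vanishes on (0, 2pi).  With c = cos theta, F = sum_j x_j sigma_j^2 / D_j(c)
   for the linear polynomials D_j(c) = 1 + alpha_j^2 - 2 alpha_j c.  Clearing
   denominators, sum_j x_j sigma_j^2 prod_(k <> j) D_k has degree < J but
   vanishes on (-1, 1), so it is zero.  At the root (1 + alpha_j^2)/(2 alpha_j)
   of D_j no other D_k vanishes, because the alpha's are distinct and
   |alpha_j alpha_k| < 1; this forces x_j = 0 whenever alpha_j <> 0, and then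
   the single remaining coefficient (alpha_j = 0) vanishes too. *)

Section PartialFractions.
Local Open Scope ring_scope.

Lemma size_prod_linear_leq (F : nzRingType) (I : Type) (r : seq I) (P : pred I)
    (p : I -> {poly F}) :
  (forall i, size (p i) <= 2)%N -> (size (\prod_(i <- r | P i) p i)%R <= (count P r).+1)%N.
Proof.
move=> size_p; elim: r => [|i r IH]; first by rewrite big_nil size_poly1.
rewrite big_cons /=; case: (P i) => //=.
apply: leq_trans (size_polyMleq _ _) _.
by rewrite -subn1 leq_subLR (leq_trans (leq_add (size_p i) IH)) // add1n.
Qed.

Lemma partial_fraction_coef_eq0 (F : fieldType) (n : nat) (D : 'I_n -> {poly F})
    (y : 'I_n -> F) (s : seq F) (j : 'I_n) (r : F) :
  (forall k, size (D k) <= 2)%N -> uniq s -> (n < size s)%N ->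
  (forall c k, c \in s -> (D k).[c] != 0) ->
  (forall c, c \in s -> \sum_k y k / (D k).[c] = 0) ->
  root (D j) r -> (forall k, k != j -> (D k).[r] != 0) ->
  y j = 0.
Proof.
move=> size_D uniq_s size_s D_s sum_s Dj_r Dk_r.
pose P := \sum_i y i *: \prod_(k | k != i) D k.
have hornerP c : P.[c] = \sum_i y i * \prod_(k | k != i) (D k).[c].
  by rewrite horner_sum; apply: eq_bigr => i _; rewrite hornerZ horner_prod.
have P_eq0 : P = 0.
  apply: roots_geq_poly_eq0 uniq_s _.
    apply/allP => c cs; rewrite /root hornerP.
    have := sum_s c cs => /(congr1 ( *%R (\prod_k (D k).[c]))).
    rewrite mulr0 mulr_sumr => scaled_sum.
    rewrite -[X in _ == X]scaled_sum; apply/eqP; apply: eq_bigr => i _.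
    rewrite [in RHS](bigD1 i) //=.
    have := D_s c i cs; set u := (D i).[c] => u_neq0.
    by rewrite [RHS]mulrC mulrA divfK.
  apply: leq_trans (size_sum _ _ _) _; apply/bigmax_leqP => i _.
  apply: leq_trans (size_scale_leq _ _) _.
  apply: leq_trans (size_prod_linear_leq _ _ _ _ _ size_D) _.
  apply: leq_trans size_s; rewrite ltnS (leq_trans (count_size _ _)) //.
  by rewrite -[index_enum _]enumT -cardT card_ord.
have := hornerP r; rewrite P_eq0 horner0 => /esym.
rewrite (bigD1 j) //= [X in _ + X]big1 => [/eqP|i ij]; last first.
  by rewrite (bigD1 j) 1?eq_sym //= (rootP Dj_r) mul0r mulr0.
by rewrite addr0 mulf_eq0 (negbTE (introT (prodf_neq0 _ _) Dk_r)) orbF => /eqP.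
Qed.

End PartialFractions.

Local Open Scope R_scope.

Lemma RInt_gt_0_at (g : R -> R) (a b t0 : R) :
  a < t0 < b -> (forall t, continuous g t) -> (forall t, 0 <= g t) -> 0 < g t0 ->
  0 < RInt g a b.
Proof.
move=> t0_in g_cont g_ge0 g_t0.
have [d near_t0] : locally t0 (fun t => Rabs (g t - g t0) < g t0).
  apply: (proj1 (continuity_pt_locally g t0)) (mkposreal _ g_t0).
  exact: (proj2 (continuity_pt_filterlim g t0) (g_cont t0)).
have d_gt0 := cond_pos d.
pose e := Rmin (d / 2) (Rmin (t0 - a) (b - t0)).
have e_gt0 : 0 < e by apply: Rmin_glb_lt; [|apply: Rmin_glb_lt]; lra.
have e_d : e <= d / 2 := Rmin_l _ _.
have e_a : e <= t0 - a := Rle_trans _ _ _ (Rmin_r _ _) (Rmin_l _ _).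
have e_b : e <= b - t0 := Rle_trans _ _ _ (Rmin_r _ _) (Rmin_r _ _).
have g_int u v : ex_RInt g u v.
  by apply: (@ex_RInt_continuous R_CompleteNormedModule) => t _; apply: g_cont.
rewrite -(RInt_Chasles g a (t0 - e) b) // -(RInt_Chasles g (t0 - e) (t0 + e) b) //.
have left_ge0 : 0 <= RInt g a (t0 - e) by apply: RInt_ge_0 => //; lra.
have right_ge0 : 0 <= RInt g (t0 + e) b by apply: RInt_ge_0 => //; lra.
suff : 0 < RInt g (t0 - e) (t0 + e) by rewrite /plus /=; lra.
apply: RInt_gt_0 => [|t t_in|t _]; [lra| |exact: g_cont].
have : Rabs (g t - g t0) < g t0.
  apply: near_t0; change (Rabs (t - t0) < d); apply: Rabs_def1; lra.
by move/Rabs_def2; lra.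
Qed.

Lemma is_RInt_sum (I : Type) (r : seq I) (f : I -> R -> R) (v : I -> R) (a b : R) :
  (forall i, is_RInt (f i) a b (v i)) ->
  is_RInt (fun t => \sum_(i <- r) f i t)%R a b (\sum_(i <- r) v i)%R.
Proof.
move=> f_int; elim: r => [|i r IH].
  apply: (is_RInt_ext (fun _ => 0)) => [t _|]; first by rewrite big_nil.
  by rewrite big_nil; have := is_RInt_const a b 0; rewrite /scal /= /mult /= Rmult_0_r.
apply: (is_RInt_ext (fun t => plus (f i t) (\sum_(j <- r) f j t)%R)) => [t _|].
  by rewrite big_cons.
by rewrite big_cons; apply: is_RInt_plus.
Qed.

Lemma continuous_sum (I : Type) (r : seq I) (f : I -> R -> R) (t : R) :
  (forall i, continuous (f i) t) -> continuous (fun u => \sum_(i <- r) f i u)%R t.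
Proof.
move=> f_cont; elim: r => [|i r IH].
  by apply: (continuous_ext (fun _ => 0)) => [u|]; [rewrite big_nil | apply: continuous_const].
apply: (continuous_ext (fun u => plus (f i u) (\sum_(j <- r) f j u)%R)) => [u|].
  by rewrite big_cons.
exact: (continuous_plus (K := R_AbsRing)).
Qed.

Lemma RInt_sqr_sum (n : nat) (f : 'I_n -> R -> R) (x : 'I_n -> R) (a b : R) :
  (forall i t, continuous (f i) t) ->
  RInt (fun t => Rsqr (\sum_i x i * f i t)%R) a b
  = (\sum_i \sum_k x i * x k * RInt (fun t => f i t * f k t) a b)%R.
Proof.
move=> f_cont; apply: is_RInt_unique.
apply: (is_RInt_ext (fun t => \sum_i \sum_k x i * x k * (f i t * f k t))%R) => [t _|].
  rewrite /Rsqr RmultE mulr_suml; apply: eq_bigr => i _.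
  rewrite mulr_sumr; apply: eq_bigr => k _.
  by rewrite mulrACA.
apply: is_RInt_sum => i; apply: is_RInt_sum => k.
apply: (is_RInt_scal _ _ _ (x i * x k)%R); apply: (@RInt_correct R_CompleteNormedModule).
apply: (@ex_RInt_continuous R_CompleteNormedModule) => t _.
exact: (continuous_mult (K := R_AbsRing)).
Qed.

Definition ar1_den (a c : R) : R := 1 + a ^ 2 - 2 * a * c.

Lemma ar1_den_gt0 a c : Rabs a < 1 -> -1 <= c <= 1 -> 0 < ar1_den a c.
Proof.
rewrite /ar1_den => a_lt1 c_bound.
have [a_ge0|a_lt0] := Rle_lt_dec 0 a.
- by rewrite Rabs_pos_eq in a_lt1; nra.
- by rewrite Rabs_left in a_lt1; nra.
Qed.

Lemma h_ar1E a s t : h_ar1 a s t = s ^ 2 / ar1_den a (cos t).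
Proof.
rewrite /h_ar1 /Cmod /expi /ar1_den /=.
rewrite !Rmult_1_r sqrt_sqrt; last by apply: Rplus_le_le_0_compat; apply: Rle_0_sqr.
by congr (_ / _); have := sin2_cos2 t; rewrite /Rsqr; nra.
Qed.

Lemma continuous_h_ar1 a s t : Rabs a < 1 -> continuous (h_ar1 a s) t.
Proof.
move=> a_lt1.
apply: (continuous_ext (fun t => s ^ 2 / ar1_den a (cos t))) => [u|].
  by rewrite h_ar1E.
apply: (@ex_derive_continuous R_AbsRing R_NormedModule); rewrite /ar1_den; auto_derive.
by have := ar1_den_gt0 a (cos t) a_lt1 (COS_bound t); rewrite /ar1_den; lra.
Qed.

Lemma G_mat_quad_form (J : nat) (alpha sigma : 'I_J -> R) (x : 'cV[R]_J) :
  (forall j, Rabs (alpha j) < 1) ->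
  (x^T *m G_mat alpha sigma *m x)%R ord0 ord0
  = / (2 * PI) * RInt (fun t => Rsqr (\sum_j x j ord0 * h_ar1 (alpha j) (sigma j) t)%R) 0 (2 * PI).
Proof.
move=> alpha_lt1; rewrite RInt_sqr_sum => [|j t]; last exact: continuous_h_ar1.
rewrite !mxE; under eq_bigr do rewrite !mxE mulr_suml.
rewrite exchange_big RmultE mulr_sumr; apply: eq_bigr => j _.
rewrite mulr_sumr; apply: eq_bigr => k _.
by rewrite !mxE mulrAC mulrCA.
Qed.

Definition ar1_den_poly (a : R) : {poly R} :=
  ((- (2 * a))%:P * 'X + (1 + a ^+ 2)%:P)%R.

Lemma horner_ar1_den_poly a c : (ar1_den_poly a).[c]%R = ar1_den a c.
Proof. by rewrite /ar1_den_poly hornerMXaddC hornerC /ar1_den !RealsE mulNr addrC. Qed.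

Lemma size_ar1_den_poly a : (size (ar1_den_poly a) <= 2)%N.
Proof. by rewrite size_MXaddC; case: ifP => // _; apply: size_polyC_leq1. Qed.

Definition ar1_pole (a : R) : R := (1 + a ^ 2) / (2 * a).

Lemma ar1_den_at_pole a b : a <> 0 -> ar1_den b (ar1_pole a) = (a - b) * (1 - a * b) / a.
Proof. by move=> a_neq0; rewrite /ar1_den /ar1_pole; field. Qed.

Lemma inv_INR_SS_bounds i : 0 < / INR i.+2 < 1.
Proof.
have INR_gt1 : 1 < INR i.+2 by rewrite !S_INR; have := pos_INR i; lra.
split; first by apply: Rinv_0_lt_compat; lra.
by rewrite -Rinv_1; apply: Rinv_1_lt_contravar; lra.
Qed.

Lemma ar1_den_inv_independent (J : nat) (alpha y : 'I_J -> R) :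
  injective alpha -> (forall j, Rabs (alpha j) < 1) ->
  (forall c, -1 < c < 1 -> (\sum_j y j / ar1_den (alpha j) c)%R = 0) ->
  forall j, y j = 0.
Proof.
move=> alpha_inj alpha_lt1 sum_eq0.
have den_neq0 k c : -1 < c < 1 -> ar1_den (alpha k) c <> 0.
  by move=> c_in; apply: Rgt_not_eq; apply: ar1_den_gt0 => //; lra.
pose s := mkseq (fun i => / INR i.+2) J.+1.
have s_in c : c \in s -> -1 < c < 1.
  by case/mapP => i _ ->; have := inv_INR_SS_bounds i; lra.
have uniq_s : uniq s.
  by apply: mkseq_uniq => i k /Rinv_eq_reg /INR_eq [].
have coef_eq0 j : alpha j <> 0 -> y j = 0.
  move=> alpha_j_neq0.
  apply: (@partial_fraction_coef_eq0 _ _ (fun k => ar1_den_poly (alpha k)) y s j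
            (ar1_pole (alpha j))).
  - by move=> k; apply: size_ar1_den_poly.
  - exact: uniq_s.
  - by rewrite size_mkseq.
  - by move=> c k cs; rewrite horner_ar1_den_poly; apply/eqP/den_neq0/s_in.
  - by move=> c cs; under eq_bigr do rewrite horner_ar1_den_poly; apply/sum_eq0/s_in.
  - by apply/eqP; rewrite horner_ar1_den_poly ar1_den_at_pole // Rminus_diag_eq // /Rdiv !Rmult_0_l.
  move=> k kj; apply/eqP; rewrite horner_ar1_den_poly ar1_den_at_pole //.
  have alpha_jk : alpha j <> alpha k by move/alpha_inj => jk; move: kj; rewrite jk eqxx.
  have alpha_jk_ne1 : 1 <> alpha j * alpha k.
    move=> e; have := Rabs_mult (alpha j) (alpha k); rewrite -e Rabs_R1.
    have := alpha_lt1 j; have := alpha_lt1 k.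
    by have := Rabs_pos (alpha j); have := Rabs_pos (alpha k); nra.
  apply: Rmult_integral_contrapositive_currified; last exact: Rinv_neq_0_compat.
  by apply: Rmult_integral_contrapositive_currified; apply: Rminus_eq_contra.
move=> j; have [alpha_j0|] := Req_dec (alpha j) 0; last exact: coef_eq0.
have zero_in : -1 < 0 < 1 by lra.
have := sum_eq0 0 zero_in; rewrite (bigD1 j) //= big1 => [|k kj].
  have -> : ar1_den (alpha j) 0 = 1 by rewrite alpha_j0 /ar1_den; ring.
  by rewrite addr0 divr1.
rewrite coef_eq0 ?mul0r // => alpha_k0.
by move: kj; rewrite (alpha_inj k j) ?eqxx // alpha_k0 alpha_j0.
Qed.

Theorem proposition3 (J : nat) (alpha sigma : 'I_J -> R) :
  (1 <= J)%nat ->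
  (forall j, (Rabs (alpha j) < 1)) ->
  (forall j, (0 < sigma j)) ->
  injective alpha ->
  pos_def (G_mat alpha sigma).
Proof.
move=> _ alpha_lt1 sigma_gt0 alpha_inj; split.
  by move=> j k; rewrite !mxE; congr (_ * _); apply: RInt_ext => t _; apply: Rmult_comm.
move=> x x_neq0; rewrite G_mat_quad_form //.
pose F t := (\sum_j x j ord0 * h_ar1 (alpha j) (sigma j) t)%R.
have F_cont t : continuous F t.
  apply: continuous_sum => j; apply: (continuous_mult (K := R_AbsRing)).
    exact: continuous_const.
  exact: continuous_h_ar1.
have PI_gt0 := PI_RGT_0.
apply: Rmult_lt_0_compat; first by apply: Rinv_0_lt_compat; lra.
have [[t t_in Ft_neq0] | F_eq0] := classic (exists2 t, 0 < t < 2 * PI & F t <> 0).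
  apply: (RInt_gt_0_at _ _ _ t) => // [u|u|]; last exact: Rsqr_pos_lt.
    exact: (continuous_mult (K := R_AbsRing)).
  exact: Rle_0_sqr.
exfalso; apply: x_neq0; apply/matrixP => i l; rewrite (ord1 l) !mxE.
suff /(_ i) : forall j, x j ord0 * sigma j ^ 2 = 0.
  by case/Rmult_integral => // /pow_nonzero; have := sigma_gt0 i; lra.
apply: ar1_den_inv_independent alpha_inj alpha_lt1 _ => c c_in.
have acos_in : 0 < acos c < 2 * PI by have := acos_bound_lt c c_in; lra.
transitivity (F (acos c)); last by apply: NNPP => Fc_neq0; apply: F_eq0; exists (acos c).
apply: eq_bigr => j _; rewrite h_ar1E cos_acos; last lra.
by rewrite RdivE mulrA.
Qed.
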